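(* In a PL+C model, suppose $\sum_{i\in\mathcal U}p_i\ge\alpha k$ for some $\alpha>1$. Then for every $i\in\mathcal U$, $$p_i\ge \Pr_{PLC}(\mathcal R_{i\le k})\cdot\left[1-\left(\alpha e^{1-\alpha}\right)^k\right].$$
   Context: PL+C model: universe $\mathcal U=\{1,\dots,n\}$, fixed ranking length $k\le n$. Each item $i$ has a utility $u_i\in\mathbb R$ and a consideration probability $p_i\in(0,1]$. A consideration set $C$ is drawn by including each item independently with probability $p_i$, conditioned on $|C|\ge k$: $\Pr_C(C)=\frac{1}{z_{k,p}}\prod_{h\in C}p_h\prod_{h\notin C}(1-p_h)$ for $|C|\ge k$ (with $z_{k,p}$ the normalizing constant), and $0$ otherwise. Given $C$, a length-$k$ ranking $r$ has probability $\Pr_{PL}(r\mid C)=\prod_{t=1}^k \frac{\exp(u_{r_t})}{\sum_{h\in C\setminus\{r_1,\dots,r_{t-1}\}}\exp(u_h)}$ if all $r_t\in C$, else $0$. $\Pr_{PLC}(r)=\sum_C\Pr_C(C)\Pr_{PL}(r\mid C)$, and for a set $R$ of rankings $\Pr_{PLC}(R)=\sum_{r\in R}\Pr_{PLC}(r)$. $\mathcal R_{i\le k}$ is the set of length-$k$ rankings containing $i$ (in any position). *)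

From mathcomp Require Import all_boot all_order all_algebra.
From mathcomp Require Import reals sequences.
From mathcomp.analysis Require Import exp.
Set Implicit Arguments. Unset Strict Implicit. Unset Printing Implicit Defensive.
Import Order.TTheory GRing.Theory Num.Theory.
Local Open Scope ring_scope.

(* Universe U = {1..n} is represented by 'I_n (items 0..n-1).
   u : utilities, p : consideration probabilities. *)
Section PLC.
Variables (R : realType) (n k : nat) (u p : 'I_n -> R).

Definition cweight (C : {set 'I_n}) : R :=
  (\prod_(h in C) p h) * (\prod_(h in ~: C) (1 - p h)).

Definition zkp : R := \sum_(C : {set 'I_n} | (k <= #|C|)%N) cweight C.

Definition PrC (C : {set 'I_n}) : R :=
  if (k <= #|C|)%N then cweight C / zkp else 0.

Definition is_ranking (r : k.-tuple 'I_n) : bool := uniq r.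

Definition PrPL (r : k.-tuple 'I_n) (C : {set 'I_n}) : R :=
  if all (fun x => x \in C) r then
    \prod_(t < k) (expR (u (tnth r t)) /
       \sum_(h in C | h \notin take t r) expR (u h))
  else 0.

Definition PrPLC (r : k.-tuple 'I_n) : R :=
  \sum_(C : {set 'I_n}) PrC C * PrPL r C.

Definition PrPLC_set (S : {set k.-tuple 'I_n}) : R :=
  \sum_(r in S) PrPLC r.

Definition R_le_k (i : 'I_n) : {set k.-tuple 'I_n} :=
  [set r : k.-tuple 'I_n | is_ranking r && (i \in r)].

End PLC.

From mathcomp Require Import all_boot all_order all_algebra.
From mathcomp Require Import reals sequences.
From mathcomp.analysis Require Import exp.
From mathcomp Require Import ring lra.

Set Implicit Arguments.
Unset Strict Implicit.
Unset Printing Implicit Defensive.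
Import Order.TTheory GRing.Theory Num.Theory.
Local Open Scope ring_scope.

(* Let [Z = z_{k,p}] and let [C] be drawn with independent inclusions (no
   conditioning).  Conditioning on [|C| >= k] divides by [Z], and for a fixed
   [C] the Plackett-Luce probabilities of the rankings of [C] sum to at most 1
   and vanish on rankings containing an item outside [C]; hence
   [Pr(R_{i<=k}) * Z <= Pr(i \in C) = p_i].  A Chernoff bound, weighting each
   set [C] by [alpha ^ (k - |C|) >= 1], gives
   [1 - Z = Pr(|C| < k) <= alpha^k * prod_h (1 - (1 - 1/alpha) p_h)
                        <= alpha^k * exp (-(1 - 1/alpha) * alpha k)
                         = (alpha e^(1 - alpha))^k]. *)

Lemma ler_sum_subpred (R : numDomainType) (I : finType) (P Q : pred I)
    (F : I -> R) :
  (forall i, P i -> Q i) -> (forall i, Q i -> 0 <= F i) ->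
  \sum_(i | P i) F i <= \sum_(i | Q i) F i.
Proof.
move=> PQ F_ge0; rewrite [leLHS]big_mkcond [leRHS]big_mkcond.
apply: ler_sum => i _; case: (boolP (P i)) => [/PQ -> //|_].
by case: ifP => // /F_ge0.
Qed.

Lemma sum_set_prod_setC (R : comNzRingType) (T : finType) (a b : T -> R) :
  \sum_(C : {set T}) (\prod_(h in C) a h * \prod_(h in ~: C) b h)
  = \prod_h (a h + b h).
Proof.
transitivity (\prod_h \sum_(j : bool) (if j then a h else b h)); last first.
  by apply: eq_bigr => h _; rewrite big_bool.
rewrite bigA_distr_bigA.
rewrite (reindex (fun f : {ffun T -> bool} => [set x | f x])) /=.
  apply: eq_bigr => f _; rewrite [RHS](bigID (fun h => f h)) /=; congr (_ * _).
    by apply: eq_big => h; rewrite ?inE // => ->.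
  by apply: eq_big => h; rewrite ?inE // => /negbTE ->.
exists (fun C : {set T} => [ffun x => x \in C]) => [f _|C _].
  by apply/ffunP => x; rewrite ffunE inE.
by apply/setP => x; rewrite inE ffunE.
Qed.

Lemma prod1D_le_expR_sum (R : realType) (I : finType) (x : I -> R) :
  (forall h, 0 <= 1 + x h) -> \prod_h (1 + x h) <= expR (\sum_h x h).
Proof.
move=> x_ge; rewrite expR_sum; apply: ler_prod => h _.
by rewrite x_ge expR_ge1Dx.
Qed.

Lemma sum_tuple_cons (R : nmodType) (T : finType) (m : nat)
    (P : pred (m.+1.-tuple T)) (F : m.+1.-tuple T -> R) :
  \sum_(t | P t) F t =
  \sum_x \sum_(r : m.-tuple T | P [tuple of x :: r]) F [tuple of x :: r].
Proof.
rewrite pair_big_dep /=.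
rewrite (reindex (fun q : T * m.-tuple T => [tuple of q.1 :: q.2])) //=.
exists (fun t : m.+1.-tuple T => (thead t, [tuple of behead t])).
  by move=> [x r] _ /=; congr (_, _); apply: val_inj.
by move=> t _; case/tupleP: t => x r; apply: val_inj.
Qed.

Section ConsiderationSets.
Variables (R : realType) (n : nat) (p : 'I_n -> R).

Lemma sum_cweight : \sum_(C : {set 'I_n}) cweight p C = 1.
Proof.
by rewrite /cweight sum_set_prod_setC; apply: big1 => h _; rewrite addrC subrK.
Qed.

Lemma sum_cweight_mem (i : 'I_n) :
  \sum_(C : {set 'I_n} | i \in C) cweight p C = p i.
Proof.
pose q h := if h == i then 0 else 1 - p h.
transitivity
  (\sum_(C : {set 'I_n}) (\prod_(h in C) p h * \prod_(h in ~: C) q h)).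
  rewrite big_mkcond; apply: eq_bigr => C _; rewrite /cweight.
  case: (boolP (i \in C)) => iC.
    congr (_ * _); apply: eq_bigr => h; rewrite inE /q.
    by case: eqP => // ->; rewrite iC.
  by rewrite [X in _ = _ * X](bigD1 i) ?inE //= /q eqxx mul0r mulr0.
rewrite sum_set_prod_setC (bigD1 i) //= /q eqxx addr0 big1 ?mulr1 //.
by move=> h /negbTE ->; rewrite addrC subrK.
Qed.

Lemma zkp_eq (k : nat) :
  zkp k p = 1 - \sum_(C : {set 'I_n} | (#|C| < k)%N) cweight p C.
Proof.
rewrite -sum_cweight (bigID (fun C : {set 'I_n} => (k <= #|C|)%N)) /=.
by under [X in _ - X]eq_bigl do rewrite ltnNge; rewrite addrK.
Qed.

Hypotheses (p_ge0 : forall h, 0 <= p h) (p_le1 : forall h, p h <= 1).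

Lemma cweight_ge0 (C : {set 'I_n}) : 0 <= cweight p C.
Proof.
by apply: mulr_ge0; apply: prodr_ge0 => h _; rewrite ?subr_ge0.
Qed.

Lemma zkp_ge0 (k : nat) : 0 <= zkp k p.
Proof. by apply: sumr_ge0 => C _; apply: cweight_ge0. Qed.

Lemma PrC_ge0 (k : nat) (C : {set 'I_n}) : 0 <= PrC k p C.
Proof.
by rewrite /PrC; case: ifP => _ //; rewrite divr_ge0 ?cweight_ge0 ?zkp_ge0.
Qed.

Lemma PrC_mul_zkp_le (k : nat) (C : {set 'I_n}) :
  PrC k p C * zkp k p <= cweight p C.
Proof.
rewrite /PrC; case: ifP => _; last by rewrite mul0r cweight_ge0.
have [->|Z_neq0] := eqVneq (zkp k p) 0; first by rewrite mulr0 cweight_ge0.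
by rewrite divfK.
Qed.

Lemma sum_cweight_card_lt_le_prod (alpha : R) (k : nat) : 1 <= alpha ->
  \sum_(C : {set 'I_n} | (#|C| < k)%N) cweight p C
  <= alpha ^+ k * \prod_h (alpha^-1 * p h + (1 - p h)).
Proof.
move=> alpha_ge1; have alpha_gt0 : 0 < alpha by lra.
have ai_ge0 : 0 <= alpha^-1 by rewrite invr_ge0 ltW.
have ak_ge0 : 0 <= alpha ^+ k by rewrite exprn_ge0 // ltW.
rewrite -sum_set_prod_setC mulr_sumr.
set w := fun C : {set 'I_n} =>
  alpha ^+ k * (\prod_(h in C) (alpha^-1 * p h) * \prod_(h in ~: C) (1 - p h)).
apply: (@le_trans _ _ (\sum_(C : {set 'I_n} | (#|C| < k)%N) w C)).
  apply: ler_sum => C /ltnW C_le_k.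
  have -> : w C = alpha ^+ k * alpha^-1 ^+ #|C| * cweight p C.
    by rewrite /w /cweight prodrMl; ring.
  apply: ler_peMl; first exact: cweight_ge0.
  rewrite -[1](mulfV (expf_neq0 k (lt0r_neq0 alpha_gt0))) -exprVn.
  by apply: ler_wpM2l => //; apply: ler_wiXn2l => //; rewrite invf_le1.
apply: ler_sum_subpred => // C _; apply/mulr_ge0/mulr_ge0 => //.
  by apply: prodr_ge0 => h _; apply: mulr_ge0.
by apply: prodr_ge0 => h _; rewrite subr_ge0.
Qed.

Lemma sum_cweight_card_lt_le (alpha : R) (k : nat) :
  1 <= alpha -> alpha * k%:R <= \sum_h p h ->
  \sum_(C : {set 'I_n} | (#|C| < k)%N) cweight p C
  <= (alpha * expR (1 - alpha)) ^+ k.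
Proof.
move=> alpha_ge1 sum_ge; have alpha_gt0 : 0 < alpha by lra.
apply: le_trans (sum_cweight_card_lt_le_prod k alpha_ge1) _.
rewrite exprMn -expRM_natr; apply: ler_wpM2l; first by rewrite exprn_ge0 ?ltW.
rewrite (eq_bigr (fun h => 1 + - (1 - alpha^-1) * p h)); last first.
  by move=> h _; ring.
have factor_ge0 h : 0 <= 1 + - (1 - alpha^-1) * p h.
  have -> : 1 + - (1 - alpha^-1) * p h = alpha^-1 * p h + (1 - p h) by ring.
  by rewrite addr_ge0 ?subr_ge0 ?mulr_ge0 ?invr_ge0 ?p_ge0 ?p_le1 ?ltW.
apply: le_trans (prod1D_le_expR_sum factor_ge0) _.
rewrite ler_expR -mulr_sumr.
have gap_ge0 : 0 <= 1 - alpha^-1 by rewrite subr_ge0 invf_le1.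
have -> : (1 - alpha) * k%:R = - (1 - alpha^-1) * (alpha * k%:R).
  by field; rewrite lt0r_neq0.
by rewrite !mulNr lerN2 ler_wpM2l.
Qed.

End ConsiderationSets.

Section PlackettLuce.
Variables (R : realType) (n : nat) (u : 'I_n -> R).

Lemma PrPL_ge0 (m : nat) (r : m.-tuple 'I_n) (C : {set 'I_n}) :
  0 <= PrPL u r C.
Proof.
rewrite /PrPL; case: ifP => _ //; apply: prodr_ge0 => t _.
by rewrite divr_ge0 ?expR_ge0 ?sumr_ge0 // => h _; rewrite expR_ge0.
Qed.

Lemma PrPL_eq0 (m : nat) (r : m.-tuple 'I_n) (C : {set 'I_n}) (i : 'I_n) :
  i \in r -> i \notin C -> PrPL u r C = 0.
Proof.
by move=> ir /negbTE iC; rewrite /PrPL; case: allP => // /(_ i ir); rewrite iC.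
Qed.

Lemma PrPL_cons (m : nat) (x : 'I_n) (r : m.-tuple 'I_n) (C : {set 'I_n}) :
  x \notin r ->
  PrPL u [tuple of x :: r] C =
  (if x \in C then expR (u x) / \sum_(h in C) expR (u h) else 0)
  * PrPL u r (C :\ x).
Proof.
move=> xr; rewrite /PrPL /=.
case: (boolP (x \in C)) => xC /=; last by rewrite mul0r.
have -> : all (fun y => y \in C) r = all (fun y => y \in C :\ x) r.
  apply: eq_in_all => y yr; rewrite !inE.
  by case: eqP => [yx|//]; move: xr; rewrite -yx yr.
case: ifP => _; last by rewrite mulr0.
rewrite big_ord_recl; congr (_ * _).
  by congr (_ / _); apply: eq_bigl => h; rewrite /= ?in_nil andbT.
apply: eq_bigr => j _; rewrite tnthS; congr (_ / _).
apply: eq_bigl => h /=; rewrite !inE negb_or.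
by case: (h == x); case: (h \in C).
Qed.

Lemma sum_PrPL_le1 (m : nat) (C : {set 'I_n}) :
  \sum_(r : m.-tuple 'I_n | uniq r) PrPL u r C <= 1.
Proof.
elim: m C => [|m IH] C.
  rewrite (big_pred1 [tuple]); last by move=> r; rewrite tuple0 /= eqxx.
  by rewrite /PrPL /= big_ord0.
rewrite sum_tuple_cons.
set W := \sum_(h in C) expR (u h).
apply: (@le_trans _ _ (\sum_x (if x \in C then expR (u x) / W else 0))).
  apply: ler_sum => x _.
  under eq_bigr => r /andP[xr _] do rewrite PrPL_cons //.
  rewrite -mulr_sumr -[leRHS]mulr1; apply: ler_wpM2l.
    case: ifP => _ //.
    by rewrite divr_ge0 ?expR_ge0 ?sumr_ge0 // => h _; rewrite expR_ge0.
  apply: le_trans (IH (C :\ x)).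
  by apply: ler_sum_subpred => [r /andP[]|r _] //; apply: PrPL_ge0.
rewrite -big_mkcond /= -mulr_suml -/W.
by have [->|W_neq0] := eqVneq W 0; rewrite ?mul0r ?mulfV.
Qed.

Lemma sum_PrPL_R_le_k (k : nat) (i : 'I_n) (C : {set 'I_n}) :
  \sum_(r in R_le_k k i) PrPL u r C <= (i \in C)%:R.
Proof.
case: (boolP (i \in C)) => iC.
  apply: le_trans (sum_PrPL_le1 k C).
  apply: ler_sum_subpred => [r|r _]; last exact: PrPL_ge0.
  by rewrite inE => /andP[].
by rewrite big1 // => r; rewrite inE => /andP[_ ir]; apply: PrPL_eq0 iC.
Qed.

End PlackettLuce.

Section PLC.
Variables (R : realType) (n k : nat) (u p : 'I_n -> R).
Hypotheses (p_ge0 : forall h, 0 <= p h) (p_le1 : forall h, p h <= 1).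

Lemma PrPLC_set_ge0 (S : {set k.-tuple 'I_n}) : 0 <= PrPLC_set u p S.
Proof.
apply: sumr_ge0 => r _; apply: sumr_ge0 => C _.
by rewrite mulr_ge0 ?PrC_ge0 ?PrPL_ge0.
Qed.

Lemma PrPLC_R_le_k_mul_zkp_le (i : 'I_n) :
  PrPLC_set u p (R_le_k k i) * zkp k p <= p i.
Proof.
rewrite /PrPLC_set /PrPLC exchange_big /= mulr_suml.
rewrite -sum_cweight_mem [leRHS]big_mkcond.
apply: ler_sum => C _; rewrite -mulr_sumr mulrAC -mulrb -mulr_natr.
rewrite ler_pM ?mulr_ge0 ?PrC_ge0 ?zkp_ge0 ?PrC_mul_zkp_le ?sum_PrPL_R_le_k //.
by apply: sumr_ge0 => r _; apply: PrPL_ge0.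
Qed.

End PLC.

Theorem theorem4 (R : realType) (n k : nat) (u p : 'I_n -> R)
  (hkn : (k <= n)%N)
  (hp : forall i, 0 < p i <= 1)
  (alpha : R) (halpha : 1 < alpha)
  (hsum : alpha * k%:R <= \sum_(i < n) p i) :
  forall i : 'I_n,
    PrPLC_set u p (R_le_k k i) * (1 - (alpha * expR (1 - alpha)) ^+ k) <= p i.
Proof.
move=> i.
have p_ge0 h : 0 <= p h by case/andP: (hp h) => /ltW.
have p_le1 h : p h <= 1 by case/andP: (hp h).
apply: le_trans (PrPLC_R_le_k_mul_zkp_le k u p_ge0 p_le1 i).
apply: ler_wpM2l; first exact: PrPLC_set_ge0.
rewrite zkp_eq lerD2l lerN2.
by apply: sum_cweight_card_lt_le => //; rewrite ltW.
Qed.
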